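(* Let $n\neq 1$ be a real number, $k_n=n-1$, and $k_0,k_1,k_2\in\mathbb{R}$. On the phase space with canonical coordinates $(r,\phi,p_r,p_\phi)$, $r>0$, restricted to the open set where $\cos(k_n\phi)\neq 0$, consider $$H_{nb}=\tfrac12 r^{2n}\Big(p_r^2+\tfrac{p_\phi^2}{r^2}\Big)+\frac{k_0}{r^{2k_n}}\big(\cos^2(k_n\phi)+4\sin^2(k_n\phi)\big)+r^{2k_n}\frac{k_1}{\cos^2(k_n\phi)}+\frac{k_2}{r^{k_n}}\sin(k_n\phi).$$ With $P_1=r^n\big(p_r\cos(k_n\phi)+\tfrac1r p_\phi\sin(k_n\phi)\big)$ and $P_2=r^n\big(p_r\sin(k_n\phi)-\tfrac1r p_\phi\cos(k_n\phi)\big)$, the functions $$J_{b1}=P_1^2+\frac{2k_0}{r^{2k_n}}\cos^2(k_n\phi)+2k_1r^{2k_n}\sec^2(k_n\phi),\qquad J_{b2}=P_2^2+\frac{8k_0}{r^{2k_n}}\sin^2(k_n\phi)+\frac{2k_2}{r^{k_n}}\sin(k_n\phi),$$ $$J_{b3}=P_1p_\phi-\frac{k_0}{r^{3k_n}}\cos(k_n\phi)\sin(2k_n\phi)+k_1r^{k_n}\sec^3(k_n\phi)\sin(2k_n\phi)-\frac{k_2}{2r^{2k_n}}\cos^2(k_n\phi)$$ are three independent constants of motion of $H_{nb}$, i.e. $\{J_{bj},H_{nb}\}=0$ for $j=1,2,3$; hence $H_{nb}$ is superintegrable.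
   Context: The Poisson bracket is the canonical one in $(r,\phi,p_r,p_\phi)$. A constant of motion of $H$ is a function $F$ with $\{F,H\}=0$. *)

From Stdlib Require Import Reals.
From Coquelicot Require Import Coquelicot.
Open Scope R_scope.

Definition PSfun := R -> R -> R -> R -> R.

Definition d_r (F : PSfun) r ph pr pph := Derive (fun x => F x ph pr pph) r.
Definition d_phi (F : PSfun) r ph pr pph := Derive (fun x => F r x pr pph) ph.
Definition d_pr (F : PSfun) r ph pr pph := Derive (fun x => F r ph x pph) pr.
Definition d_pphi (F : PSfun) r ph pr pph := Derive (fun x => F r ph pr x) pph.

Definition poisson (F G : PSfun) : PSfun := fun r ph pr pph =>
  d_r F r ph pr pph * d_pr G r ph pr pph - d_pr F r ph pr pph * d_r G r ph pr pph
  + d_phi F r ph pr pph * d_pphi G r ph pr pph - d_pphi F r ph pr pph * d_phi G r ph pr pph.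

Definition ps_domain (kn : R) r ph (pr pph : R) : Prop := 0 < r /\ cos (kn * ph) <> 0.

Definition grad_indep3 (F1 F2 F3 : PSfun) r ph pr pph : Prop :=
  forall a b c : R,
    a * d_r F1 r ph pr pph + b * d_r F2 r ph pr pph + c * d_r F3 r ph pr pph = 0 ->
    a * d_phi F1 r ph pr pph + b * d_phi F2 r ph pr pph + c * d_phi F3 r ph pr pph = 0 ->
    a * d_pr F1 r ph pr pph + b * d_pr F2 r ph pr pph + c * d_pr F3 r ph pr pph = 0 ->
    a * d_pphi F1 r ph pr pph + b * d_pphi F2 r ph pr pph + c * d_pphi F3 r ph pr pph = 0 ->
    a = 0 /\ b = 0 /\ c = 0.

(* Functional independence on the ps_domain: the gradients are linearly
   independent on a dense subset of the ps_domain. *)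
Definition functionally_independent3 (kn : R) (F1 F2 F3 : PSfun) : Prop :=
  forall r ph pr pph eps, ps_domain kn r ph pr pph -> 0 < eps ->
    exists r' ph' pr' pph',
      ps_domain kn r' ph' pr' pph' /\
      Rabs (r' - r) < eps /\ Rabs (ph' - ph) < eps /\
      Rabs (pr' - pr) < eps /\ Rabs (pph' - pph) < eps /\
      grad_indep3 F1 F2 F3 r' ph' pr' pph'.

Definition Hnb (n k0 k1 k2 : R) : PSfun := fun r ph pr pph =>
  let kn := n - 1 in
  / 2 * Rpower r (2 * n) * (pr ^ 2 + pph ^ 2 / r ^ 2)
  + k0 / Rpower r (2 * kn) * (cos (kn * ph) ^ 2 + 4 * sin (kn * ph) ^ 2)
  + Rpower r (2 * kn) * (k1 / cos (kn * ph) ^ 2)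
  + k2 / Rpower r kn * sin (kn * ph).

Definition P1 (n : R) : PSfun := fun r ph pr pph =>
  let kn := n - 1 in
  Rpower r n * (pr * cos (kn * ph) + / r * pph * sin (kn * ph)).

Definition P2 (n : R) : PSfun := fun r ph pr pph =>
  let kn := n - 1 in
  Rpower r n * (pr * sin (kn * ph) - / r * pph * cos (kn * ph)).

Definition sec (x : R) : R := / cos x.

Definition Jb1 (n k0 k1 k2 : R) : PSfun := fun r ph pr pph =>
  let kn := n - 1 in
  P1 n r ph pr pph ^ 2 + 2 * k0 / Rpower r (2 * kn) * cos (kn * ph) ^ 2
  + 2 * k1 * Rpower r (2 * kn) * sec (kn * ph) ^ 2.

Definition Jb2 (n k0 k1 k2 : R) : PSfun := fun r ph pr pph =>
  let kn := n - 1 in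
  P2 n r ph pr pph ^ 2 + 8 * k0 / Rpower r (2 * kn) * sin (kn * ph) ^ 2
  + 2 * k2 / Rpower r kn * sin (kn * ph).

Definition Jb3 (n k0 k1 k2 : R) : PSfun := fun r ph pr pph =>
  let kn := n - 1 in
  P1 n r ph pr pph * pph
  - k0 / Rpower r (3 * kn) * cos (kn * ph) * sin (2 * kn * ph)
  + k1 * Rpower r kn * sec (kn * ph) ^ 3 * sin (2 * kn * ph)
  - k2 / (2 * Rpower r (2 * kn)) * cos (kn * ph) ^ 2.

(* The brackets are a finite computation: writing every power of r through
   X = r^n, the brackets {J_bj, H_nb} are rational functions of
   (X, r, cos, sin, p_r, p_phi) that vanish modulo cos^2 + sin^2 = 1.
   For independence, the minor of the Jacobian of (J_b1, J_b2, J_b3) in the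
   variables (p_r, p_phi, phi) is a quartic polynomial in the momenta, with
   quartic part -4 k_n r^(2n) P1^2 P2.  On a line in momentum space along which
   P1 P2 does not vanish, its fourth finite difference is therefore nonzero, so
   the minor is nonzero at one of five equally spaced points, which can be
   taken arbitrarily close to any given point. *)
From Pilot Require Import Defs.
From Stdlib Require Import Reals Lra Nsatz.
From Coquelicot Require Import Coquelicot.
Open Scope R_scope.

Lemma exp_pred_mul_ln n r : 0 < r -> exp ((n - 1) * ln r) = exp (n * ln r) / r.
Proof.
intros Hr. replace (n * ln r) with ((n - 1) * ln r + ln r) by ring.
rewrite exp_plus, exp_ln by lra. field. lra.
Qed.

Lemma exp_2pred_mul_ln n r : 0 < r -> exp (2 * (n - 1) * ln r) = exp (n * ln r) ^ 2 / r ^ 2.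
Proof.
intros Hr. replace (2 * (n - 1) * ln r) with ((n - 1) * ln r + (n - 1) * ln r) by ring.
rewrite exp_plus, exp_pred_mul_ln by lra. field. lra.
Qed.

Lemma exp_3pred_mul_ln n r : 0 < r -> exp (3 * (n - 1) * ln r) = exp (n * ln r) ^ 3 / r ^ 3.
Proof.
intros Hr.
replace (3 * (n - 1) * ln r) with ((n - 1) * ln r + (n - 1) * ln r + (n - 1) * ln r) by ring.
rewrite !exp_plus, exp_pred_mul_ln by lra. field. lra.
Qed.

Lemma exp_2mul_ln n r : exp (2 * n * ln r) = exp (n * ln r) ^ 2.
Proof. replace (2 * n * ln r) with (n * ln r + n * ln r) by ring. rewrite exp_plus. ring. Qed.

Lemma sin_2mul k x : sin (2 * k * x) = 2 * sin (k * x) * cos (k * x).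
Proof. replace (2 * k * x) with (2 * (k * x)) by ring. apply sin_2a. Qed.

Lemma cos_2mul k x : cos (2 * k * x) = cos (k * x) ^ 2 - sin (k * x) ^ 2.
Proof. replace (2 * k * x) with (2 * (k * x)) by ring. rewrite cos_2a. ring. Qed.

Ltac solve_nonzero :=
  repeat first [ exact I | assumption | lra | split
    | apply Rmult_integral_contrapositive_currified | apply Rinv_neq_0_compat
    | apply Rgt_not_eq; apply exp_pos ].

Ltac rewrite_Derive :=
  match goal with |- context [Derive ?f ?x] =>
    let v := fresh "v" in let H := fresh "H" in
    evar (v : R);
    assert (H : is_derive f x v) by (unfold v; auto_derive; [ .. | reflexivity ]; solve_nonzero);
    rewrite (is_derive_unique f x v H); unfold v; clear H v
  end.

(* After differentiation, every power of r is expressed through X = exp (n ln r)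
   and the goal becomes a rational identity in (X, r, c, s) modulo c^2 + s^2 = 1. *)
Ltac phase_space_identity n r ph Hr :=
  unfold poisson, d_r, d_phi, d_pr, d_pphi, Hnb, Jb1, Jb2, Jb3, Defs.P1, Defs.P2, sec, Rpower;
  repeat rewrite_Derive;
  rewrite ?(exp_pred_mul_ln _ _ Hr), ?(exp_2pred_mul_ln _ _ Hr), ?(exp_3pred_mul_ln _ _ Hr),
    ?exp_2mul_ln, ?sin_2mul, ?cos_2mul;
  apply Rminus_diag_uniq;
  pose proof (sin2_cos2 ((n - 1) * ph)) as Hcs; unfold Rsqr in Hcs;
  assert (HX : 0 < exp (n * ln r)) by apply exp_pos;
  set (c := cos ((n - 1) * ph)) in *; set (s := sin ((n - 1) * ph)) in *;
  set (X := exp (n * ln r)) in *; clearbody c s X;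
  field_simplify; try solve [solve_nonzero];
  match goal with |- ?N / _ = 0 =>
    replace N with 0 by (clear - Hcs; cbn [pow]; nsatz); unfold Rdiv; ring
  end.

Definition det3 (a1 b1 c1 a2 b2 c2 a3 b3 c3 : R) : R :=
  a1 * (b2 * c3 - c2 * b3) - b1 * (a2 * c3 - c2 * a3) + c1 * (a2 * b3 - b2 * a3).

Lemma det3_neq0_kernel_trivial x1 y1 z1 x2 y2 z2 x3 y3 z3 a b c :
  a * x1 + b * y1 + c * z1 = 0 -> a * x2 + b * y2 + c * z2 = 0 -> a * x3 + b * y3 + c * z3 = 0 ->
  det3 x1 y1 z1 x2 y2 z2 x3 y3 z3 <> 0 -> a = 0 /\ b = 0 /\ c = 0.
Proof.
intros e1 e2 e3 hd. unfold det3 in hd.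
set (D := x1 * (y2 * z3 - z2 * y3) - y1 * (x2 * z3 - z2 * x3) + z1 * (x2 * y3 - y2 * x3)) in hd.
assert (ha : a * D = 0) by (unfold D; nsatz).
assert (hb : b * D = 0) by (unfold D; nsatz).
assert (hc : c * D = 0) by (unfold D; nsatz).
apply Rmult_integral in ha; apply Rmult_integral in hb; apply Rmult_integral in hc.
intuition.
Qed.

Definition jacobian_minor (F1 F2 F3 : PSfun) : PSfun := fun r ph pr pph =>
  det3 (d_pr F1 r ph pr pph) (d_pr F2 r ph pr pph) (d_pr F3 r ph pr pph)
       (d_pphi F1 r ph pr pph) (d_pphi F2 r ph pr pph) (d_pphi F3 r ph pr pph)
       (d_phi F1 r ph pr pph) (d_phi F2 r ph pr pph) (d_phi F3 r ph pr pph).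

Lemma grad_indep3_of_jacobian_minor F1 F2 F3 r ph pr pph :
  jacobian_minor F1 F2 F3 r ph pr pph <> 0 -> grad_indep3 F1 F2 F3 r ph pr pph.
Proof.
intros hd a b c _ e_ph e_pr e_pph.
exact (det3_neq0_kernel_trivial _ _ _ _ _ _ _ _ _ a b c e_pr e_pph e_ph hd).
Qed.

Definition fourth_difference (f : R -> R) (h : R) : R :=
  f 0 - 4 * f h + 6 * f (2 * h) - 4 * f (3 * h) + f (4 * h).

Lemma fourth_difference_neq0 f h :
  fourth_difference f h <> 0 -> exists k, 0 <= k <= 4 /\ f (k * h) <> 0.
Proof.
intros Hd.
destruct (Req_dec (f (0 * h)) 0) as [e0 | e0]; [| exists 0; split; [lra | exact e0]].
destruct (Req_dec (f (1 * h)) 0) as [e1 | e1]; [| exists 1; split; [lra | exact e1]].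
destruct (Req_dec (f (2 * h)) 0) as [e2 | e2]; [| exists 2; split; [lra | exact e2]].
destruct (Req_dec (f (3 * h)) 0) as [e3 | e3]; [| exists 3; split; [lra | exact e3]].
destruct (Req_dec (f (4 * h)) 0) as [e4 | e4]; [| exists 4; split; [lra | exact e4]].
exfalso; apply Hd; unfold fourth_difference.
rewrite Rmult_0_l in e0; rewrite Rmult_1_l in e1.
rewrite e0, e1, e2, e3, e4; ring.
Qed.

Lemma exists_direction c s : c <> 0 -> exists u, c + u * s <> 0 /\ s - u * c <> 0.
Proof.
intros Hc. destruct (Req_dec s 0) as [Hs | Hs].
- exists 1. rewrite Hs. split; lra.
- exists 0. split; lra.
Qed.

Lemma Rabs_shift_lt p k d eps : 0 <= k <= 4 -> 4 * Rabs d < eps -> Rabs (p + k * d - p) < eps.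
Proof.
intros Hk Hd. replace (p + k * d - p) with (k * d) by ring.
rewrite Rabs_mult, (Rabs_pos_eq k) by lra.
pose proof (Rabs_pos d). nra.
Qed.

Section Superintegrable.
Variables (n k0 k1 k2 r ph : R).
Hypotheses (Hr : 0 < r) (Hc : cos ((n - 1) * ph) <> 0).

Local Notation J1 := (Jb1 n k0 k1 k2).
Local Notation J2 := (Jb2 n k0 k1 k2).
Local Notation J3 := (Jb3 n k0 k1 k2).
Local Notation c := (cos ((n - 1) * ph)).
Local Notation s := (sin ((n - 1) * ph)).
Local Notation A := (Rpower r n).

Lemma poisson_Jb1_Hnb pr pph : poisson J1 (Hnb n k0 k1 k2) r ph pr pph = 0.
Proof. phase_space_identity n r ph Hr. Qed.

Lemma poisson_Jb2_Hnb pr pph : poisson J2 (Hnb n k0 k1 k2) r ph pr pph = 0.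
Proof. phase_space_identity n r ph Hr. Qed.

Lemma poisson_Jb3_Hnb pr pph : poisson J3 (Hnb n k0 k1 k2) r ph pr pph = 0.
Proof. phase_space_identity n r ph Hr. Qed.

Section Gradient.
Variables pr pph : R.
Local Notation q1 := (Defs.P1 n r ph pr pph).
Local Notation q2 := (Defs.P2 n r ph pr pph).

Lemma d_pr_Jb1 : d_pr J1 r ph pr pph = 2 * q1 * A * c.
Proof. phase_space_identity n r ph Hr. Qed.
Lemma d_pr_Jb2 : d_pr J2 r ph pr pph = 2 * q2 * A * s.
Proof. phase_space_identity n r ph Hr. Qed.
Lemma d_pr_Jb3 : d_pr J3 r ph pr pph = A * c * pph.
Proof. phase_space_identity n r ph Hr. Qed.
Lemma d_pphi_Jb1 : d_pphi J1 r ph pr pph = 2 * q1 * (A / r) * s.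
Proof. phase_space_identity n r ph Hr. Qed.
Lemma d_pphi_Jb2 : d_pphi J2 r ph pr pph = - 2 * q2 * (A / r) * c.
Proof. phase_space_identity n r ph Hr. Qed.
Lemma d_pphi_Jb3 : d_pphi J3 r ph pr pph = q1 + (A / r) * s * pph.
Proof. phase_space_identity n r ph Hr. Qed.
Lemma d_phi_Jb1 : d_phi J1 r ph pr pph = - 2 * (n - 1) * q1 * q2 + d_phi J1 r ph 0 0.
Proof. phase_space_identity n r ph Hr. Qed.
Lemma d_phi_Jb2 : d_phi J2 r ph pr pph = 2 * (n - 1) * q1 * q2 + d_phi J2 r ph 0 0.
Proof. phase_space_identity n r ph Hr. Qed.
Lemma d_phi_Jb3 : d_phi J3 r ph pr pph = - (n - 1) * q2 * pph + d_phi J3 r ph 0 0.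
Proof. phase_space_identity n r ph Hr. Qed.

Lemma jacobian_minor_Jb :
  jacobian_minor J1 J2 J3 r ph pr pph =
  det3 (2 * q1 * A * c) (2 * q2 * A * s) (A * c * pph)
       (2 * q1 * (A / r) * s) (- 2 * q2 * (A / r) * c) (q1 + (A / r) * s * pph)
       (- 2 * (n - 1) * q1 * q2 + d_phi J1 r ph 0 0) (2 * (n - 1) * q1 * q2 + d_phi J2 r ph 0 0)
       (- (n - 1) * q2 * pph + d_phi J3 r ph 0 0).
Proof.
unfold jacobian_minor.
rewrite d_pr_Jb1, d_pr_Jb2, d_pr_Jb3, d_pphi_Jb1, d_pphi_Jb2, d_pphi_Jb3,
  d_phi_Jb1, d_phi_Jb2, d_phi_Jb3.
reflexivity.
Qed.

End Gradient.

Lemma det3_momentum_leading_part cs sn X ri be :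
  cs * cs + sn * sn = 1 -> r * ri = 1 ->
  let p1 := X * (1 * cs + ri * be * sn) in let p2 := X * (1 * sn - ri * be * cs) in
  det3 (2 * p1 * X * cs) (2 * p2 * X * sn) (X * cs * be)
       (2 * p1 * (X * ri) * sn) (- 2 * p2 * (X * ri) * cs) (p1 + (X * ri) * sn * be)
       (- 2 * (n - 1) * p1 * p2) (2 * (n - 1) * p1 * p2) (- (n - 1) * p2 * be)
  = - 4 * (n - 1) * X ^ 2 * p1 ^ 2 * p2.
Proof. intros Hcs Hri p1 p2. unfold p1, p2, det3. cbn [pow]. nsatz. Qed.

Lemma jacobian_minor_fourth_difference pr pph be h :
  fourth_difference (fun t => jacobian_minor J1 J2 J3 r ph (pr + t) (pph + t * be)) h
  = - 96 * (n - 1) * h ^ 4 * A ^ 2 * Defs.P1 n r ph 1 be ^ 2 * Defs.P2 n r ph 1 be.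
Proof.
unfold fourth_difference. rewrite !jacobian_minor_Jb.
transitivity (24 * h ^ 4 * (- 4 * (n - 1) * A ^ 2 * Defs.P1 n r ph 1 be ^ 2 * Defs.P2 n r ph 1 be)).
2: ring.
unfold Defs.P1, Defs.P2.
assert (Hri : r * / r = 1) by (field; lra).
pose proof (sin2_cos2 ((n - 1) * ph)) as Hcs; unfold Rsqr in Hcs; rewrite Rplus_comm in Hcs.
rewrite <- (det3_momentum_leading_part c s A (/ r) be Hcs Hri).
unfold det3, Rdiv. ring.
Qed.

Lemma grad_indep3_on_line (hn : n <> 1) pr pph u h :
  0 < h -> c + u * s <> 0 -> s - u * c <> 0 ->
  exists k, 0 <= k <= 4 /\ grad_indep3 J1 J2 J3 r ph (pr + k * h) (pph + k * h * (u * r)).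
Proof.
intros Hh Hu1 Hu2.
assert (HA : 0 < A) by apply exp_pos.
assert (HP1 : Defs.P1 n r ph 1 (u * r) = A * (c + u * s)) by (unfold Defs.P1; field; lra).
assert (HP2 : Defs.P2 n r ph 1 (u * r) = A * (s - u * c)) by (unfold Defs.P2; field; lra).
destruct (fourth_difference_neq0
  (fun t => jacobian_minor J1 J2 J3 r ph (pr + t) (pph + t * (u * r))) h) as [k [Hk Hmin]].
{ rewrite jacobian_minor_fourth_difference, HP1, HP2.
  repeat apply Rmult_integral_contrapositive_currified; try apply pow_nonzero; lra. }
exists k. split; [exact Hk | exact (grad_indep3_of_jacobian_minor _ _ _ _ _ _ _ Hmin)].
Qed.

End Superintegrable.

Theorem mainTheorem5 (n k0 k1 k2 : R) (hn : n <> 1) :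
  (forall r ph pr pph, ps_domain (n - 1) r ph pr pph ->
     poisson (Jb1 n k0 k1 k2) (Hnb n k0 k1 k2) r ph pr pph = 0 /\
     poisson (Jb2 n k0 k1 k2) (Hnb n k0 k1 k2) r ph pr pph = 0 /\
     poisson (Jb3 n k0 k1 k2) (Hnb n k0 k1 k2) r ph pr pph = 0) /\
  functionally_independent3 (n - 1) (Jb1 n k0 k1 k2) (Jb2 n k0 k1 k2) (Jb3 n k0 k1 k2).
Proof.
split.
- intros r ph pr pph [Hr Hc].
  split; [| split]; [apply poisson_Jb1_Hnb | apply poisson_Jb2_Hnb | apply poisson_Jb3_Hnb]; assumption.
- intros r ph pr pph eps [Hr Hc] Heps.
  destruct (exists_direction _ (sin ((n - 1) * ph)) Hc) as [u [Hu1 Hu2]].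
  pose proof (Rabs_pos (u * r)) as Hur.
  set (h := eps / (5 * (1 + Rabs (u * r)))).
  assert (Hh : 0 < h) by (unfold h; apply Rdiv_lt_0_compat; lra).
  assert (Hscale : h * (1 + Rabs (u * r)) = eps / 5) by (unfold h; field; lra).
  destruct (grad_indep3_on_line n k0 k1 k2 r ph Hr Hc hn pr pph u h Hh Hu1 Hu2) as [k [Hk Hind]].
  exists r, ph, (pr + k * h), (pph + k * h * (u * r)).
  refine (conj (conj Hr Hc) (conj _ (conj _ (conj _ (conj _ Hind))))).
  1, 2: rewrite Rminus_diag, Rabs_R0; exact Heps.
  + apply Rabs_shift_lt; [exact Hk |]. rewrite Rabs_pos_eq by lra. nra.
  + rewrite Rmult_assoc. apply Rabs_shift_lt; [exact Hk |]. rewrite Rabs_mult, Rabs_pos_eq by lra. nra.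
Qed.
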